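(* Let $f_1,f_2$ be strongly hyperbolic functions. Let $C\in\mathcal{C}^-(f_1,f_2)$, $p\in C$, $q\notin C$, with $q$ not parallel to $p$. Then there is at most one $D\in\mathcal{C}^-(f_1,f_2)$ with $p,q\in D$ and $C\cap D=\{p\}$.
   Context: Identify $\mathbb{S}^1$ with $\mathbb{R}\cup\{\infty\}$, $\mathcal{P}=\mathbb{S}^1\times\mathbb{S}^1$, $\mathbb{R}^+=(0,\infty)$. Two points of $\mathcal{P}$ are parallel if they have the same first coordinate or the same second coordinate. A function $f:\mathbb{R}^+\to\mathbb{R}^+$ is strongly hyperbolic if: (1) $\lim_{x\to0+}f(x)=+\infty$, $\lim_{x\to+\infty}f(x)=0$; (2) $f$ strictly convex; (3) $\lim_{x\to+\infty}f(x+b)/f(x)=1$ for each $b\in\mathbb{R}$; (4) $f$ differentiable; (5) $\ln|f'|$ strictly convex. For $a>0$, $b,c\in\mathbb{R}$: $f_{a,b,c}(x)=af_1(x+b)+c$ for $x>-b$, $f_{a,b,c}(x)=-af_2(-x-b)+c$ for $x<-b$; $\overline{f_{a,b,c}}=\{(x,f_{a,b,c}(x)):x\ne-b\}\cup\{(-b,\infty),(\infty,c)\}$; $\overline{l_{s,t}}=\{(x,sx+t):x\in\mathbb{R}\}\cup\{(\infty,\infty)\}$; $\mathcal{C}^-(f_1,f_2)=\{\overline{f_{a,b,c}}:a>0,b,c\in\mathbb{R}\}\cup\{\overline{l_{s,t}}:s<0,t\in\mathbb{R}\}$. *)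

From Stdlib Require Import Reals.
Open Scope R_scope.

(* S^1 = R ∪ {∞}, encoded as option R with None = ∞. *)
Definition S1 : Type := option R.
Definition Pt : Type := (S1 * S1)%type.

Definition parallel (p q : Pt) : Prop := fst p = fst q \/ snd p = snd q.

Definition strictly_convex_pos (g : R -> R) : Prop :=
  forall x y t, 0 < x -> 0 < y -> x <> y -> 0 < t < 1 ->
    g (t * x + (1 - t) * y) < t * g x + (1 - t) * g y.

(* f : R+ -> R+ is strongly hyperbolic (only values on (0,∞) matter). *)
Definition strongly_hyperbolic (f : R -> R) : Prop :=
  (forall x, 0 < x -> 0 < f x) /\
  (forall M, exists d, 0 < d /\ forall x, 0 < x < d -> M < f x) /\
  (forall eps, 0 < eps -> exists N, forall x, N < x -> 0 < x -> Rabs (f x) < eps) /\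
  strictly_convex_pos f /\
  (forall b eps, 0 < eps -> exists N, forall x, N < x -> 0 < x -> 0 < x + b ->
       Rabs (f (x + b) / f x - 1) < eps) /\
  (exists f' : R -> R,
     (forall x, 0 < x -> derivable_pt_lim f x (f' x)) /\
     strictly_convex_pos (fun x => ln (Rabs (f' x)))).

Definition fabc (f1 f2 : R -> R) (a b c x : R) : R :=
  if Rlt_dec (- b) x then a * f1 (x + b) + c else - a * f2 (- x - b) + c.

Definition fbar (f1 f2 : R -> R) (a b c : R) : Pt -> Prop :=
  fun z =>
    (exists x, x <> - b /\ z = (Some x, Some (fabc f1 f2 a b c x))) \/
    z = (Some (- b), None) \/ z = (None, Some c).

Definition lbar (s t : R) : Pt -> Prop :=
  fun z => (exists x, z = (Some x, Some (s * x + t))) \/ z = (None, None).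

Definition in_Cminus (f1 f2 : R -> R) (C : Pt -> Prop) : Prop :=
  (exists a b c, 0 < a /\ C = fbar f1 f2 a b c) \/
  (exists s t, s < 0 /\ C = lbar s t).

From Stdlib Require Import Reals Lra Ranalysis5.
Open Scope R_scope.

(* Away from its points at infinity a curve of C^-(f1, f2) is the graph of a
   decreasing function whose branches are convex (right of the pole) or concave
   (left of it).  If two curves meet only at a finite point p they are tangent
   there: otherwise they cross transversally at p, and comparing them near the
   poles and asymptotes yields a second intersection.  Conversely, two distinct
   curves tangent at p meet nowhere else: for a line this is convexity of the
   branch; for two hyperbolas with both poles on the same side of p it is the
   strict log-convexity of |f'|, which makes a f(v + d) - a' f(v) unimodal in v.
   So D1 and D2 are both tangent to C at p, hence to each other, and they share
   q.  If p is at infinity, touching at p forces the scale parameter (or the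
   slope of the lines) to agree, and q, not parallel to p, fixes the last one.
   The symmetry (x, y) |-> (-x, -y), which exchanges f1 and f2, reduces points
   left of the poles to points right of them. *)

(** * Convexity, roots and derivatives *)

Definition strictly_convex_on (S : R -> Prop) (g : R -> R) : Prop :=
  forall u w t, S u -> S w -> u <> w -> 0 < t < 1 ->
    g (t * u + (1 - t) * w) < t * g u + (1 - t) * g w.

Lemma strictly_convex_chord S g x y z :
  strictly_convex_on S g -> S x -> S z -> x < y < z ->
  (z - x) * g y < (z - y) * g x + (y - x) * g z.
Proof.
  intros Hg Hx Hz Hy.
  set (t := (z - y) / (z - x)).
  assert (Ht : 0 < t < 1).
  { unfold t; split; [apply Rdiv_lt_0_compat; lra|].
    apply (Rmult_lt_reg_r (z - x)); [lra|]. unfold Rdiv.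
    rewrite Rmult_assoc, Rinv_l; lra. }
  assert (H := Hg x z t Hx Hz ltac:(lra) Ht).
  replace (t * x + (1 - t) * z) with y in H by (unfold t; field; lra).
  apply (Rmult_lt_compat_l (z - x)) in H; [|lra].
  replace ((z - x) * (t * g x + (1 - t) * g z))
    with ((z - y) * g x + (y - x) * g z) in H by (unfold t; field; lra).
  exact H.
Qed.

Lemma strictly_convex_increments S g d u v :
  strictly_convex_on S g -> S u -> S (v + d) -> 0 < d -> u < v ->
  g (u + d) - g u < g (v + d) - g v.
Proof.
  intros Hg Hu Hvd Hd Huv.
  assert (K1 := strictly_convex_chord S g u (u + d) (v + d) Hg Hu Hvd ltac:(lra)).
  assert (K2 := strictly_convex_chord S g u v (v + d) Hg Hu Hvd ltac:(lra)).
  apply (Rmult_lt_reg_l (v + d - u)); [lra|].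
  replace (v + d - (u + d)) with (v - u) in K1 by ring.
  replace (u + d - u) with d in K1 by ring.
  replace (v + d - v) with d in K2 by ring.
  nra.
Qed.

(* With [e = y - x0], convexity gives [(g (x0 + t e) - g x0) / t < g y - g x0]; let [t -> 0]. *)
Lemma strictly_convex_tangent_le S g x0 y m :
  strictly_convex_on S g -> S x0 -> S y -> y <> x0 ->
  derivable_pt_lim g x0 m -> m * (y - x0) <= g y - g x0.
Proof.
  intros Hg Hx0 Hy Hne Hd.
  apply Rnot_lt_le; intros Hlt.
  set (e := y - x0) in *.
  assert (He : 0 < Rabs e) by (apply Rabs_pos_lt; unfold e; lra).
  set (eps := (m * e - (g y - g x0)) / (2 * Rabs e)).
  assert (Heps : 0 < eps) by (apply Rdiv_lt_0_compat; lra).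
  destruct (Hd eps Heps) as [del Hdel].
  assert (Hdel0 := cond_pos del).
  set (t := Rmin (1 / 2) (del / (2 * Rabs e))).
  assert (Ht1 : t <= 1 / 2) by apply Rmin_l.
  assert (Ht2 : t <= del / (2 * Rabs e)) by apply Rmin_r.
  assert (Ht0 : 0 < t) by (apply Rmin_glb_lt; [lra | apply Rdiv_lt_0_compat; lra]).
  assert (Hte : t * e <> 0) by (apply Rmult_integral_contrapositive; split; unfold e; lra).
  assert (Hsmall : Rabs (t * e) < del).
  { rewrite Rabs_mult, (Rabs_right t) by lra.
    apply Rle_lt_trans with (del / (2 * Rabs e) * Rabs e).
    - apply Rmult_le_compat_r; lra.
    - replace (del / (2 * Rabs e) * Rabs e) with (del / 2) by (field; lra). lra. }
  specialize (Hdel (t * e) Hte Hsmall).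
  assert (Hc := Hg y x0 t Hy Hx0 Hne ltac:(lra)).
  replace (t * y + (1 - t) * x0) with (x0 + t * e) in Hc by (unfold e; ring).
  set (Q := (g (x0 + t * e) - g x0) / (t * e)) in Hdel.
  assert (HQ : Q * (t * e) = g (x0 + t * e) - g x0) by (unfold Q, e; field; lra).
  assert (HQe : Q * e < g y - g x0).
  { apply (Rmult_lt_reg_l t); [lra|]. nra. }
  assert (Hdev : Rabs ((Q - m) * e) < eps * Rabs e).
  { rewrite Rabs_mult. apply Rmult_lt_compat_r; lra. }
  replace (eps * Rabs e) with ((m * e - (g y - g x0)) / 2) in Hdev by (unfold eps; field; lra).
  apply Rabs_def2 in Hdev. lra.
Qed.

Lemma strictly_convex_tangent_lt S g x0 x m :
  strictly_convex_on S g -> (forall u w z, S u -> S w -> u <= z <= w -> S z) ->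
  S x0 -> S x -> x <> x0 -> derivable_pt_lim g x0 m -> g x0 + m * (x - x0) < g x.
Proof.
  intros Hg Hint Hx0 Hx Hne Hd.
  set (mid := (x0 + x) / 2).
  assert (Hmid : S mid).
  { destruct (Rle_dec x0 x); [apply (Hint x0 x) | apply (Hint x x0)]; auto; unfold mid; lra. }
  assert (Hw := strictly_convex_tangent_le S g x0 mid m Hg Hx0 Hmid ltac:(unfold mid; lra) Hd).
  assert (Hc := Hg x x0 (1 / 2) Hx Hx0 Hne ltac:(lra)).
  replace (1 / 2 * x + (1 - 1 / 2) * x0) with mid in Hc by (unfold mid; field).
  replace (mid - x0) with ((x - x0) / 2) in Hw by (unfold mid; field).
  lra.
Qed.

Lemma ivt_open h a b :
  a < b -> (forall x, a <= x <= b -> continuity_pt h x) -> h a * h b < 0 ->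
  exists z, a < z < b /\ h z = 0.
Proof.
  intros Hab Hc Hsign.
  assert (Hup : forall k, (forall x, a <= x <= b -> continuity_pt k x) ->
            k a < 0 -> 0 < k b -> exists z, a < z < b /\ k z = 0).
  { intros k Hk Ha Hb. destruct (IVT_interv k a b Hk Hab Ha Hb) as [z [[Hz1 Hz2] Hz]].
    exists z; split; [split|]; auto.
    - destruct Hz1 as [ | <- ]; auto; lra.
    - destruct Hz2 as [ | -> ]; auto; lra. }
  destruct (Rlt_dec (h a) 0) as [Ha | Ha].
  - apply Hup; auto. nra.
  - apply Rnot_lt_le in Ha.
    destruct (Hup (fun x => - h x)) as [z [Hz Hz0]].
    + intros x Hx. apply (continuity_pt_opp h), Hc, Hx.
    + assert (h a <> 0) by (intros E; rewrite E in Hsign; lra). lra.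
    + nra.
    + exists z; split; auto; lra.
Qed.

Lemma derivative_sign_near h x0 m :
  derivable_pt_lim h x0 m -> m <> 0 ->
  exists del, 0 < del /\
    forall k, k <> 0 -> Rabs k < del -> 0 < m * ((h (x0 + k) - h x0) / k).
Proof.
  intros Hd Hm.
  assert (Hm2 : 0 < Rabs m / 2) by (pose proof (Rabs_pos_lt m Hm); lra).
  destruct (Hd _ Hm2) as [del Hdel].
  exists del; split; [apply cond_pos|].
  intros k Hk Hkd. specialize (Hdel k Hk Hkd).
  set (Q := (h (x0 + k) - h x0) / k) in *.
  unfold Rabs in *. destruct (Rcase_abs (Q - m)), (Rcase_abs m); nra.
Qed.

(* Near a transversal zero [h] takes both signs, so one of the two outer
   subintervals carries a sign change. *)
Lemma another_root h xl x0 xr m :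
  xl < x0 < xr -> (forall x, xl <= x <= xr -> continuity_pt h x) ->
  h x0 = 0 -> derivable_pt_lim h x0 m -> m <> 0 -> 0 < h xl * h xr ->
  exists z, xl < z < xr /\ z <> x0 /\ h z = 0.
Proof.
  intros Hx Hc H0 Hd Hm Hends.
  destruct (derivative_sign_near h x0 m Hd Hm) as [del [Hdel Hsign]].
  set (k := Rmin (del / 2) (Rmin (x0 - xl) (xr - x0) / 2)).
  assert (Hk1 : k <= del / 2) by apply Rmin_l.
  assert (Hk2 : k <= Rmin (x0 - xl) (xr - x0) / 2) by apply Rmin_r.
  assert (Hmin1 : Rmin (x0 - xl) (xr - x0) <= x0 - xl) by apply Rmin_l.
  assert (Hmin2 : Rmin (x0 - xl) (xr - x0) <= xr - x0) by apply Rmin_r.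
  assert (Hk0 : 0 < k).
  { apply Rmin_glb_lt; [lra|]. assert (0 < Rmin (x0 - xl) (xr - x0)) by (apply Rmin_glb_lt; lra). lra. }
  assert (Hr := Hsign k ltac:(lra) ltac:(rewrite Rabs_right; lra)).
  assert (Hl := Hsign (- k) ltac:(lra) ltac:(rewrite Rabs_Ropp, Rabs_right; lra)).
  rewrite H0, Rminus_0_r in Hr, Hl.
  assert (Hr' : 0 < m * h (x0 + k)).
  { replace (m * h (x0 + k)) with (m * (h (x0 + k) / k) * k) by (field; lra). nra. }
  assert (Hl' : m * h (x0 + - k) < 0).
  { replace (m * h (x0 + - k)) with (- (m * (h (x0 + - k) / - k) * k)) by (field; lra). nra. }
  assert (Hopp : h (x0 + - k) * h (x0 + k) < 0) by nra.
  destruct (Rlt_dec (h xl * h (x0 + - k)) 0) as [Hleft | Hleft].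
  - destruct (ivt_open h xl (x0 + - k)) as [z [Hz Hz0]]; try lra.
    + intros x Hx'. apply Hc. lra.
    + exists z. repeat split; lra.
  - destruct (ivt_open h (x0 + k) xr) as [z [Hz Hz0]]; try lra.
    + intros x Hx'. apply Hc. lra.
    + nra.
    + exists z. repeat split; lra.
Qed.

Lemma derivable_pt_lim_shift f x b l :
  derivable_pt_lim f (x + b) l -> derivable_pt_lim (fun y => f (y + b)) x l.
Proof.
  intros H eps Heps. destruct (H eps Heps) as [del Hdel]. exists del.
  intros k Hk Hkd. replace (x + k + b) with (x + b + k) by ring. auto.
Qed.

Lemma derivable_pt_lim_reflect g x l :
  derivable_pt_lim g (- x) l -> derivable_pt_lim (fun y => - g (- y)) x l.
Proof.
  intros H eps Heps. destruct (H eps Heps) as [del Hdel]. exists del.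
  intros k Hk Hkd.
  replace (- (x + k)) with (- x + - k) by ring.
  replace ((- g (- x + - k) - - g (- x)) / k - l)
    with ((g (- x + - k) - g (- x)) / - k - l) by (field; auto).
  apply Hdel; [lra | now rewrite Rabs_Ropp].
Qed.

Lemma derivable_continuous h x l : derivable_pt_lim h x l -> continuity_pt h x.
Proof. intros Hd. apply derivable_continuous_pt. exists l. exact Hd. Qed.

Lemma line_derivable s t x : derivable_pt_lim (fun y => s * y + t) x s.
Proof.
  intros eps Heps. exists (mkposreal eps Heps). intros k Hk _. simpl.
  replace ((s * (x + k) + t - (s * x + t)) / k - s) with 0 by (field; exact Hk).
  rewrite Rabs_R0. exact Heps.
Qed.

Lemma derivable_pt_lim_sub g k x l m :
  derivable_pt_lim g x l -> derivable_pt_lim k x m ->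
  derivable_pt_lim (fun y => g y - k y) x (l - m).
Proof. exact (derivable_pt_lim_minus g k x l m). Qed.

Lemma affine_shift_derivable f a b c x l :
  derivable_pt_lim f (x + b) l -> derivable_pt_lim (fun y => a * f (y + b) + c) x (a * l).
Proof.
  intros Hd. rewrite <- (Rplus_0_r (a * l)).
  apply (derivable_pt_lim_plus (fun y => a * f (y + b)) (fun _ => c)).
  - apply (derivable_pt_lim_scal (fun y => f (y + b))), derivable_pt_lim_shift, Hd.
  - apply derivable_pt_lim_const.
Qed.

(** * Strongly hyperbolic functions *)

Definition hyperbolic_with_deriv (f f' : R -> R) : Prop :=
  strongly_hyperbolic f /\ (forall x, 0 < x -> derivable_pt_lim f x (f' x)) /\
  strictly_convex_pos (fun x => ln (Rabs (f' x))).

Lemma hyperbolic_with_deriv_exists f :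
  strongly_hyperbolic f -> exists f', hyperbolic_with_deriv f f'.
Proof.
  intros Hf. pose proof Hf as (_ & _ & _ & _ & _ & f' & Hd & Hc).
  exists f'. split; [exact Hf | split; assumption].
Qed.

Definition gap (f : R -> R) (al be d v : R) : R := al * f (v + d) - be * f v.

Section StronglyHyperbolic.

Context {f f' : R -> R} (Hf : hyperbolic_with_deriv f f').

Lemma sh_pos x : 0 < x -> 0 < f x.
Proof. apply Hf. Qed.

Lemma sh_derivable x : 0 < x -> derivable_pt_lim f x (f' x).
Proof. apply Hf. Qed.

Lemma sh_convex : strictly_convex_on (fun x => 0 < x) f.
Proof. apply Hf. Qed.

Lemma sh_large_near_0 a K x1 : 0 < a -> 0 < x1 -> exists v, 0 < v < x1 /\ K < a * f v.
Proof.
  intros Ha Hx1. destruct Hf as [(_ & H0 & _) _].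
  destruct (H0 (K / a)) as [d [Hd Hlarge]].
  set (v := Rmin d x1 / 2).
  assert (Rmin d x1 <= d) by apply Rmin_l. assert (Rmin d x1 <= x1) by apply Rmin_r.
  assert (0 < Rmin d x1) by (apply Rmin_glb_lt; lra).
  exists v. split; [unfold v; lra|].
  assert (Hv : K / a < f v) by (apply Hlarge; unfold v; lra).
  apply (Rmult_lt_compat_l a) in Hv; [|lra].
  replace (a * (K / a)) with K in Hv by (field; lra). exact Hv.
Qed.

Lemma sh_small_near_infty a eps x1 :
  0 < a -> 0 < eps -> exists v, x1 < v /\ 0 < v /\ a * f v < eps.
Proof.
  intros Ha Heps. destruct Hf as [(_ & _ & Hinf & _) _].
  destruct (Hinf (eps / a)) as [N HN]; [apply Rdiv_lt_0_compat; lra|].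
  set (v := Rmax (Rmax N x1) 0 + 1).
  assert (Rmax N x1 <= Rmax (Rmax N x1) 0) by apply Rmax_l.
  assert (0 <= Rmax (Rmax N x1) 0) by apply Rmax_r.
  assert (N <= Rmax N x1) by apply Rmax_l. assert (x1 <= Rmax N x1) by apply Rmax_r.
  exists v. split; [unfold v; lra|]. split; [unfold v; lra|].
  assert (Hv : f v < eps / a).
  { eapply Rle_lt_trans; [apply Rle_abs | apply HN; unfold v; lra]. }
  apply (Rmult_lt_compat_l a) in Hv; [|lra].
  replace (a * (eps / a)) with eps in Hv by (field; lra). exact Hv.
Qed.

(* A convex function that does not decrease somewhere grows from there on,
   which is incompatible with the limit 0 at infinity. *)
Lemma sh_decreasing x y : 0 < x -> x < y -> f y < f x.
Proof.
  intros Hx Hxy. apply Rnot_le_lt. intros Hle.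
  destruct (sh_small_near_infty 1 (f y) y) as [w [Hw [_ Hfw]]]; [lra | apply sh_pos; lra|].
  assert (Hc := strictly_convex_chord _ f x y w sh_convex Hx ltac:(simpl; lra) ltac:(lra)).
  nra.
Qed.

Lemma sh_deriv_neg x : 0 < x -> f' x < 0.
Proof.
  intros Hx.
  assert (Ht := strictly_convex_tangent_lt _ f x (x + 1) (f' x) sh_convex
    ltac:(simpl; intros; lra) Hx ltac:(simpl; lra) ltac:(lra) (sh_derivable x Hx)).
  assert (Hdec := sh_decreasing x (x + 1) Hx ltac:(lra)).
  lra.
Qed.

Lemma sh_onto y : 0 < y -> exists u, 0 < u /\ f u = y.
Proof.
  intros Hy.
  destruct (sh_large_near_0 1 y 1) as [v1 [Hv1 Hf1]]; [lra | lra |].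
  destruct (sh_small_near_infty 1 y v1) as [v2 [Hv2 [_ Hf2]]]; [lra | lra |].
  destruct (ivt_open (fun u => f u - y) v1 v2) as [z [Hz Hz0]]; [lra | | nra |].
  - intros x Hx. apply continuity_pt_minus; [eapply derivable_continuous, sh_derivable; lra | apply continuity_pt_const].
    intros ? ?; reflexivity.
  - exists z. split; lra.
Qed.

Lemma gap_derivable al be d v :
  0 < d -> 0 < v -> derivable_pt_lim (gap f al be d) v (al * f' (v + d) - be * f' v).
Proof.
  intros Hd Hv. unfold gap.
  apply (derivable_pt_lim_minus (fun y => al * f (y + d)) (fun y => be * f y)).
  - apply (derivable_pt_lim_scal (fun y => f (y + d))).
    apply derivable_pt_lim_shift, sh_derivable. lra.
  - apply (derivable_pt_lim_scal f), sh_derivable, Hv.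
Qed.

(* Taking logarithms, the critical point equation reads
   [ln al + ln|f'(v0 + d)| = ln be + ln|f'(v0)|]; the increments of the convex
   function [ln|f'|] over [d] increase, so the derivative changes sign only at [v0]. *)
Lemma gap_deriv_sign al be d v0 v :
  0 < al -> 0 < be -> 0 < d -> 0 < v0 -> 0 < v ->
  al * f' (v0 + d) = be * f' v0 ->
  (v0 < v -> al * f' (v + d) - be * f' v < 0) /\
  (v < v0 -> 0 < al * f' (v + d) - be * f' v).
Proof.
  intros Hal Hbe Hd Hv0 Hv Hcrit.
  set (psi x := ln (Rabs (f' x))).
  assert (Hpsi : strictly_convex_on (fun x => 0 < x) psi) by apply Hf.
  assert (Habs : forall x, 0 < x -> Rabs (f' x) = - f' x)
    by (intros x Hx; apply Rabs_left, sh_deriv_neg, Hx).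
  assert (Hlog : forall k x, 0 < k -> 0 < x -> ln (k * - f' x) = ln k + psi x).
  { intros k x Hk Hx. unfold psi. rewrite Habs by exact Hx.
    apply ln_mult; [exact Hk | pose proof (sh_deriv_neg x Hx); lra]. }
  assert (Hcrit' : ln al + psi (v0 + d) = ln be + psi v0).
  { rewrite <- Hlog, <- Hlog by lra. f_equal. lra. }
  assert (Hpos : forall k x, 0 < k -> 0 < x -> 0 < k * - f' x)
    by (intros k x Hk Hx; pose proof (sh_deriv_neg x Hx); nra).
  split; intros Hlt.
  - assert (I := strictly_convex_increments _ psi d v0 v Hpsi Hv0 ltac:(simpl; lra) Hd Hlt).
    assert (L : ln (be * - f' v) < ln (al * - f' (v + d))) by (rewrite !Hlog; lra).
    apply ln_lt_inv in L; try apply Hpos; lra.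
  - assert (I := strictly_convex_increments _ psi d v v0 Hpsi Hv ltac:(simpl; lra) Hd Hlt).
    assert (L : ln (al * - f' (v + d)) < ln (be * - f' v)) by (rewrite !Hlog; lra).
    apply ln_lt_inv in L; try apply Hpos; lra.
Qed.

(* By the mean value theorem [gap] increases up to [v0] and decreases after it;
   since [f] vanishes at infinity, the maximum is positive. *)
Lemma gap_strict_max al be d v0 :
  0 < al -> 0 < be -> 0 < d -> 0 < v0 -> al * f' (v0 + d) = be * f' v0 ->
  (forall v, 0 < v -> v <> v0 -> gap f al be d v < gap f al be d v0) /\
  0 < gap f al be d v0.
Proof.
  intros Hal Hbe Hd Hv0 Hcrit.
  set (k := gap f al be d).
  assert (Hmvt : forall v1 v2, 0 < v1 -> v1 < v2 -> exists c, v1 < c < v2 /\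
            k v2 - k v1 = (al * f' (c + d) - be * f' c) * (v2 - v1)).
  { intros v1 v2 Hv1 Hv12.
    destruct (MVT_cor2 k (fun c => al * f' (c + d) - be * f' c) v1 v2 Hv12) as [c [Hc1 Hc2]].
    - intros c Hc. apply gap_derivable; lra.
    - exists c. split; assumption. }
  assert (Hdec : forall v1 v2, v0 <= v1 -> v1 < v2 -> k v2 < k v1).
  { intros v1 v2 Hv1 Hv12. destruct (Hmvt v1 v2) as [c [Hc Hk]]; [lra | lra |].
    destruct (gap_deriv_sign al be d v0 c) as [Hneg _]; try lra.
    pose proof (Hneg ltac:(lra)). nra. }
  assert (Hinc : forall v1 v2, 0 < v1 -> v1 < v2 -> v2 <= v0 -> k v1 < k v2).
  { intros v1 v2 Hv1 Hv12 Hv2. destruct (Hmvt v1 v2) as [c [Hc Hk]]; [lra | lra |].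
    destruct (gap_deriv_sign al be d v0 c) as [_ Hpos]; try lra.
    pose proof (Hpos ltac:(lra)). nra. }
  split.
  - intros v Hv Hne. destruct (Rlt_dec v v0); [apply Hinc | apply Hdec]; lra.
  - apply Rnot_le_lt. intros Hle.
    assert (Hstep := Hdec v0 (v0 + 1) ltac:(lra) ltac:(lra)).
    destruct (sh_small_near_infty be (- k (v0 + 1)) (v0 + 1)) as [v [Hv [_ Hfv]]]; [lra | lra |].
    assert (Hfar := Hdec (v0 + 1) v ltac:(lra) Hv).
    assert (Hp := sh_pos (v + d) ltac:(lra)).
    assert (Hkv : k v = al * f (v + d) - be * f v) by reflexivity.
    nra.
Qed.

Lemma gap_offset_root ga al be d :
  0 < ga -> 0 < al -> 0 < be -> 0 < d -> exists v, 0 < v /\ ga + gap f al be d v = 0.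
Proof.
  intros Hga Hal Hbe Hd.
  destruct (sh_large_near_0 be (ga + al * f d) 1) as [v1 [Hv1 Hf1]]; [lra | lra |].
  destruct (sh_small_near_infty be ga v1) as [v2 [Hv2 [_ Hf2]]]; [lra | lra |].
  assert (Hd1 := sh_decreasing d (v1 + d) Hd ltac:(lra)).
  assert (Hp2 := sh_pos (v2 + d) ltac:(lra)).
  destruct (ivt_open (fun v => ga + gap f al be d v) v1 v2) as [z [Hz Hz0]]; [lra | | |].
  - intros x Hx. apply continuity_pt_plus; [apply continuity_pt_const; intros ? ?; reflexivity |].
    eapply derivable_continuous, gap_derivable; lra.
  - unfold gap.
    assert (ga + (al * f (v1 + d) - be * f v1) < 0) by nra.
    assert (0 < ga + (al * f (v2 + d) - be * f v2)) by nra.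
    nra.
  - exists z. split; [lra | exact Hz0].
Qed.

Lemma gap_root al be d : 0 < be -> be < al -> 0 < d -> exists v, 0 < v /\ gap f al be d v = 0.
Proof.
  intros Hbe Hal Hd.
  destruct (sh_large_near_0 be (al * f d) 1) as [v1 [Hv1 Hf1]]; [lra | lra |].
  assert (Hratio : exists v2, v1 < v2 /\ be * f v2 < al * f (v2 + d)).
  { destruct Hf as [(_ & _ & _ & _ & Hr & _) _].
    destruct (Hr d (1 - be / al)) as [N HN].
    { assert (be / al < 1); [|lra].
      apply (Rmult_lt_reg_r al); [lra|]. unfold Rdiv. rewrite Rmult_assoc, Rinv_l; lra. }
    set (v2 := Rmax N v1 + 1).
    assert (N <= Rmax N v1) by apply Rmax_l. assert (v1 <= Rmax N v1) by apply Rmax_r.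
    specialize (HN v2 ltac:(unfold v2; lra) ltac:(unfold v2; lra) ltac:(unfold v2; lra)).
    apply Rabs_def2 in HN.
    assert (Hp : 0 < f v2) by (apply sh_pos; unfold v2; lra).
    exists v2. split; [unfold v2; lra|].
    assert (Hq : be / al < f (v2 + d) / f v2) by lra.
    apply (Rmult_lt_compat_l (al * f v2)) in Hq; [|nra].
    replace (al * f v2 * (be / al)) with (be * f v2) in Hq by (field; lra).
    replace (al * f v2 * (f (v2 + d) / f v2)) with (al * f (v2 + d)) in Hq by (field; lra).
    exact Hq. }
  destruct Hratio as [v2 [Hv2 Hf2]].
  assert (Hd1 := sh_decreasing d (v1 + d) Hd ltac:(lra)).
  destruct (ivt_open (gap f al be d) v1 v2) as [z [Hz Hz0]]; [lra | | |].
  - intros x Hx. eapply derivable_continuous, gap_derivable; lra.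
  - unfold gap.
    assert (al * f (v1 + d) - be * f v1 < 0) by nra.
    assert (0 < al * f (v2 + d) - be * f v2) by lra.
    nra.
  - exists z. split; [lra | exact Hz0].
Qed.

End StronglyHyperbolic.

(** * The curves of C^-(f1, f2) *)

(* [fabc f1 f2 a b c] has derivative [fslope f1' f2' a b x] at every [x <> - b]. *)
Definition fslope (f1' f2' : R -> R) (a b x : R) : R :=
  if Rlt_dec (- b) x then a * f1' (x + b) else a * f2' (- x - b).

Lemma fabc_right f1 f2 a b c x : - b < x -> fabc f1 f2 a b c x = a * f1 (x + b) + c.
Proof. intros Hx. unfold fabc. destruct (Rlt_dec (- b) x); [reflexivity | lra]. Qed.

Lemma fabc_left f1 f2 a b c x : x < - b -> fabc f1 f2 a b c x = - a * f2 (- x - b) + c.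
Proof. intros Hx. unfold fabc. destruct (Rlt_dec (- b) x); [lra | reflexivity]. Qed.

Lemma fabc_shift f1 f2 a b c x : fabc f1 f2 a b c x = fabc f1 f2 a 0 c (x + b).
Proof.
  unfold fabc. destruct (Rlt_dec (- b) x), (Rlt_dec (- 0) (x + b)); try lra.
  - now rewrite Rplus_0_r.
  - now replace (- (x + b) - 0) with (- x - b) by ring.
Qed.

Lemma fabc_offset f1 f2 a b c x : fabc f1 f2 a b c x = fabc f1 f2 a b 0 x + c.
Proof. unfold fabc. destruct (Rlt_dec (- b) x); ring. Qed.

Lemma fslope_right f1' f2' a b x : - b < x -> fslope f1' f2' a b x = a * f1' (x + b).
Proof. intros Hx. unfold fslope. destruct (Rlt_dec (- b) x); [reflexivity | lra]. Qed.

Lemma fslope_left f1' f2' a b x : x < - b -> fslope f1' f2' a b x = a * f2' (- x - b).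
Proof. intros Hx. unfold fslope. destruct (Rlt_dec (- b) x); [lra | reflexivity]. Qed.

Lemma fabc_reflect f1 f2 a b c x :
  x <> - b -> fabc f2 f1 a (- b) (- c) (- x) = - fabc f1 f2 a b c x.
Proof.
  intros Hx. destruct (Rlt_dec (- b) x).
  - rewrite fabc_left, fabc_right by lra.
    replace (- - x - - b) with (x + b) by ring. ring.
  - rewrite fabc_right, fabc_left by lra.
    replace (- x + - b) with (- x - b) by ring. ring.
Qed.

Lemma fslope_reflect f1' f2' a b x :
  x <> - b -> fslope f2' f1' a (- b) (- x) = fslope f1' f2' a b x.
Proof.
  intros Hx. destruct (Rlt_dec (- b) x).
  - rewrite fslope_left, fslope_right by lra.
    now replace (- - x - - b) with (x + b) by ring.
  - rewrite fslope_right, fslope_left by lra.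
    now replace (- x + - b) with (- x - b) by ring.
Qed.

Lemma fbar_iff f1 f2 a b c z :
  fbar f1 f2 a b c z <->
  match z with
  | (Some x, Some y) => x <> - b /\ y = fabc f1 f2 a b c x
  | (Some x, None) => x = - b
  | (None, Some y) => y = c
  | (None, None) => False
  end.
Proof.
  split.
  - intros [[x [Hx ->]] | [-> | ->]]; auto.
  - destruct z as [[x|] [y|]].
    + intros [Hx ->]. left. exists x. auto.
    + intros ->. right. left. reflexivity.
    + intros ->. right. right. reflexivity.
    + intros [].
Qed.

Lemma lbar_iff s t z :
  lbar s t z <->
  match z with
  | (Some x, Some y) => y = s * x + t
  | (None, None) => True
  | _ => False
  end.
Proof.
  split.
  - intros [[x ->] | ->]; auto.
  - destruct z as [[x|] [y|]]; try contradiction.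
    + intros ->. left. exists x. reflexivity.
    + intros _. right. reflexivity.
Qed.

Section Branches.

Context {f1 f2 f1' f2' : R -> R}.
Context (H1 : hyperbolic_with_deriv f1 f1') (H2 : hyperbolic_with_deriv f2 f2').

Lemma fabc_gt_right a b c x : 0 < a -> - b < x -> c < fabc f1 f2 a b c x.
Proof.
  intros Ha Hx. rewrite fabc_right by exact Hx.
  pose proof (sh_pos H1 (x + b) ltac:(lra)). nra.
Qed.

Lemma fabc_lt_left a b c x : 0 < a -> x < - b -> fabc f1 f2 a b c x < c.
Proof.
  intros Ha Hx. rewrite fabc_left by exact Hx.
  pose proof (sh_pos H2 (- x - b) ltac:(lra)). nra.
Qed.

Lemma fabc_decreasing a b c x y :
  0 < a -> x < y -> - b < x \/ y < - b -> fabc f1 f2 a b c y < fabc f1 f2 a b c x.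
Proof.
  intros Ha Hxy [Hx | Hy].
  - rewrite !fabc_right by lra.
    pose proof (sh_decreasing H1 (x + b) (y + b) ltac:(lra) ltac:(lra)). nra.
  - rewrite !fabc_left by lra.
    pose proof (sh_decreasing H2 (- y - b) (- x - b) ltac:(lra) ltac:(lra)). nra.
Qed.

Lemma right_branch_derivable a b c x :
  - b < x -> derivable_pt_lim (fun y => a * f1 (y + b) + c) x (a * f1' (x + b)).
Proof. intros Hx. apply affine_shift_derivable, (sh_derivable H1). lra. Qed.

Lemma left_branch_derivable a b c x :
  x < - b -> derivable_pt_lim (fun y => - a * f2 (- y - b) + c) x (a * f2' (- x - b)).
Proof.
  intros Hx.
  apply (derivable_pt_lim_ext (fun y => - (a * f2 (- y + - b) + - c))); [intros y; ring_simplify; reflexivity|].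
  replace (- x - b) with (- x + - b) by ring.
  apply (derivable_pt_lim_reflect (fun u => a * f2 (u + - b) + - c)).
  apply affine_shift_derivable, (sh_derivable H2). lra.
Qed.

Lemma right_branch_convex a b c :
  0 < a -> strictly_convex_on (fun x => - b < x) (fun y => a * f1 (y + b) + c).
Proof.
  intros Ha u w t Hu Hw Hne Ht.
  assert (H := sh_convex H1 (u + b) (w + b) t ltac:(simpl; lra) ltac:(simpl; lra) ltac:(lra) Ht).
  replace (t * (u + b) + (1 - t) * (w + b)) with (t * u + (1 - t) * w + b) in H by ring.
  nra.
Qed.

Lemma between_branches_convex a b c a' b' c' :
  0 < a -> 0 < a' ->
  strictly_convex_on (fun x => - b < x < - b')
    (fun y => (a * f1 (y + b) + c) - (- a' * f2 (- y - b') + c')).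
Proof.
  intros Ha Ha' u w t Hu Hw Hne Ht.
  assert (HR := right_branch_convex a b c Ha u w t ltac:(simpl; lra) ltac:(simpl; lra) Hne Ht).
  assert (HL := sh_convex H2 (- u - b') (- w - b') t ltac:(simpl; lra) ltac:(simpl; lra) ltac:(lra) Ht).
  replace (t * (- u - b') + (1 - t) * (- w - b')) with (- (t * u + (1 - t) * w) - b') in HL by ring.
  simpl in HR. nra.
Qed.

End Branches.

(** * Touching at a finite point *)

Section RightOfPoles.

Context {f1 f2 f1' f2' : R -> R}.
Context (H1 : hyperbolic_with_deriv f1 f1') (H2 : hyperbolic_with_deriv f2 f2').

Local Notation F := (fabc f1 f2).

Lemma line_touch_slope_right s t a b c x0 :
  s < 0 -> 0 < a -> - b < x0 -> F a b c x0 = s * x0 + t ->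
  (forall z, - b < z -> F a b c z = s * z + t -> z = x0) ->
  s = a * f1' (x0 + b).
Proof.
  intros Hs Ha Hx0 Hp Honly.
  destruct (Req_dec s (a * f1' (x0 + b))) as [|Hne]; [assumption | exfalso].
  set (h x := a * f1 (x + b) + c - (s * x + t)).
  destruct (sh_large_near_0 H1 a (t - c - s * b) (x0 + b)) as [w [Hw Hfw]]; [lra | lra |].
  set (xr := Rmax x0 ((t - c) / - s) + 1).
  assert (x0 <= Rmax x0 ((t - c) / - s)) by apply Rmax_l.
  assert ((t - c) / - s <= Rmax x0 ((t - c) / - s)) by apply Rmax_r.
  assert (Hline : t - c < - s * xr).
  { replace (t - c) with (- s * ((t - c) / - s)) by (field; lra). unfold xr; nra. }
  assert (Hd : forall x, - b < x -> derivable_pt_lim h x (a * f1' (x + b) - s)).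
  { intros x Hx. apply derivable_pt_lim_sub; [apply (right_branch_derivable H1) | apply line_derivable]; assumption. }
  destruct (another_root h (- b + w) x0 xr (a * f1' (x0 + b) - s)) as [z [Hz [Hzx0 Hz0]]].
  - unfold xr; lra.
  - intros x Hx. eapply derivable_continuous, Hd. lra.
  - unfold h. rewrite fabc_right in Hp by lra. lra.
  - apply Hd, Hx0.
  - lra.
  - apply Rmult_lt_0_compat; unfold h.
    + replace (- b + w + b) with w by ring. nra.
    + pose proof (sh_pos H1 (xr + b) ltac:(unfold xr; lra)). nra.
  - apply Hzx0, Honly; [lra|]. rewrite fabc_right by lra. unfold h in Hz0. lra.
Qed.

Lemma line_tangent_meet_right s t a b c x0 z :
  s < 0 -> 0 < a -> - b < x0 -> F a b c x0 = s * x0 + t -> s = a * f1' (x0 + b) ->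
  z <> - b -> F a b c z = s * z + t -> z = x0.
Proof.
  intros Hs Ha Hx0 Hp Hslope Hz Hq.
  destruct (Req_dec z x0) as [|Hne]; [assumption | exfalso].
  destruct (Rlt_dec (- b) z) as [Hzr | Hzl].
  - assert (Ht := strictly_convex_tangent_lt _ _ x0 z s (right_branch_convex H1 a b c Ha)
      ltac:(simpl; intros; lra) Hx0 Hzr Hne
      ltac:(rewrite Hslope; apply (right_branch_derivable H1); exact Hx0)).
    simpl in Ht. rewrite fabc_right in Hp, Hq by lra. lra.
  - assert (fabc f1 f2 a b c z < c) by (apply (fabc_lt_left H2); lra).
    assert (c < fabc f1 f2 a b c x0) by (apply (fabc_gt_right H1); lra).
    nra.
Qed.

Lemma fabc_meet_right_of_poles a b c a' b' c' :
  0 < a -> 0 < a' -> b' < b -> c' < c ->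
  exists z, - b' < z /\ F a b c z = F a' b' c' z.
Proof.
  intros Ha Ha' Hb Hc.
  destruct (gap_offset_root H1 (c - c') a a' (b - b')) as [v [Hv Hv0]]; try lra.
  exists (v - b'). split; [lra|].
  rewrite !fabc_right by lra. unfold gap in Hv0.
  replace (v - b' + b) with (v + (b - b')) by ring. replace (v - b' + b') with v by ring.
  lra.
Qed.

Lemma fabc_touch_slope_right a b c a' b' c' x0 :
  0 < a -> 0 < a' -> b' < b -> c < c' -> - b' < x0 ->
  F a b c x0 = F a' b' c' x0 ->
  (forall z, - b' < z -> F a b c z = F a' b' c' z -> z = x0) ->
  a * f1' (x0 + b) = a' * f1' (x0 + b').
Proof.
  intros Ha Ha' Hb Hc Hx0 Hp Honly.
  destruct (Req_dec (a * f1' (x0 + b)) (a' * f1' (x0 + b'))) as [|Hne]; [assumption | exfalso].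
  set (d := b - b').
  set (h x := a * f1 (x + b) + c - (a' * f1 (x + b') + c')).
  assert (Hd : forall x, - b' < x ->
            derivable_pt_lim h x (a * f1' (x + b) - a' * f1' (x + b'))).
  { intros x Hx. apply derivable_pt_lim_sub; apply (right_branch_derivable H1); lra. }
  destruct (sh_large_near_0 H1 a' (c - c' + a * f1 d) (x0 + b')) as [w [Hw Hfw]]; [lra | lra |].
  destruct (sh_small_near_infty H1 a (c' - c) (x0 + b')) as [v [Hv [_ Hfv]]]; [lra | lra |].
  destruct (another_root h (- b' + w) x0 (v - b') (a * f1' (x0 + b) - a' * f1' (x0 + b')))
    as [z [Hz [Hzx0 Hz0]]].
  - lra.
  - intros x Hx. eapply derivable_continuous, Hd. lra.
  - unfold h. rewrite !fabc_right in Hp by lra. lra.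
  - apply Hd, Hx0.
  - lra.
  - assert (Hl : h (- b' + w) < 0).
    { unfold h. replace (- b' + w + b) with (w + d) by (unfold d; ring).
      replace (- b' + w + b') with w by ring.
      pose proof (sh_decreasing H1 d (w + d) ltac:(unfold d; lra) ltac:(lra)). nra. }
    assert (Hr : h (v - b') < 0).
    { unfold h. replace (v - b' + b) with (v + d) by (unfold d; ring).
      replace (v - b' + b') with v by ring.
      pose proof (sh_decreasing H1 v (v + d) ltac:(lra) ltac:(unfold d; lra)).
      pose proof (sh_pos H1 v ltac:(lra)). nra. }
    nra.
  - apply Hzx0, Honly; [lra|]. rewrite !fabc_right by lra. unfold h in Hz0. lra.
Qed.

Lemma fabc_touch_slope_between a b c a' b' c' x0 :
  0 < a -> 0 < a' -> - b < x0 < - b' ->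
  F a b c x0 = F a' b' c' x0 ->
  (forall z, - b < z < - b' -> F a b c z = F a' b' c' z -> z = x0) ->
  a * f1' (x0 + b) = a' * f2' (- x0 - b').
Proof.
  intros Ha Ha' Hx0 Hp Honly.
  destruct (Req_dec (a * f1' (x0 + b)) (a' * f2' (- x0 - b'))) as [|Hne]; [assumption | exfalso].
  set (h x := a * f1 (x + b) + c - (- a' * f2 (- x - b') + c')).
  assert (Hd : forall x, - b < x < - b' ->
            derivable_pt_lim h x (a * f1' (x + b) - a' * f2' (- x - b'))).
  { intros x Hx. apply derivable_pt_lim_sub;
      [apply (right_branch_derivable H1) | apply (left_branch_derivable H2)]; lra. }
  destruct (sh_large_near_0 H1 a (c' - c) (x0 + b)) as [w [Hw Hfw]]; [lra | lra |].
  destruct (sh_large_near_0 H2 a' (c' - c) (- b' - x0)) as [w' [Hw' Hfw']]; [lra | lra |].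
  destruct (another_root h (- b + w) x0 (- b' - w') (a * f1' (x0 + b) - a' * f2' (- x0 - b')))
    as [z [Hz [Hzx0 Hz0]]].
  - lra.
  - intros x Hx. eapply derivable_continuous, Hd. lra.
  - unfold h. rewrite fabc_right, fabc_left in Hp by lra. lra.
  - apply Hd, Hx0.
  - lra.
  - apply Rmult_lt_0_compat; unfold h.
    + replace (- b + w + b) with w by ring.
      pose proof (sh_pos H2 (- (- b + w) - b') ltac:(lra)). nra.
    + replace (- (- b' - w') - b') with w' by ring.
      pose proof (sh_pos H1 (- b' - w' + b) ltac:(lra)). nra.
  - apply Hzx0, Honly; [lra|]. rewrite fabc_right, fabc_left by lra. unfold h in Hz0. lra.
Qed.

(* [gap] attains its maximum [c' - c] exactly at [x0 + b'], so on the right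
   branches the first curve lies below the second; elsewhere the curves are
   separated by their asymptote levels and monotonicity. *)
Lemma fabc_tangent_right a b c a' b' c' x0 :
  0 < a -> 0 < a' -> b' < b -> - b' < x0 ->
  F a b c x0 = F a' b' c' x0 -> a * f1' (x0 + b) = a' * f1' (x0 + b') ->
  c < c' /\ forall z, z <> - b -> z <> - b' -> F a b c z = F a' b' c' z -> z = x0.
Proof.
  intros Ha Ha' Hb Hx0 Hp Hslope.
  set (d := b - b'). set (v0 := x0 + b').
  destruct (gap_strict_max H1 a a' d v0) as [Hmax Hpos]; try (unfold d, v0; lra).
  { unfold v0, d. now replace (x0 + b' + (b - b')) with (x0 + b) by ring. }
  assert (Hgap : forall z, - b' < z -> F a b c z - F a' b' c' z = gap f1 a a' d (z + b') + c - c').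
  { intros z Hz. unfold gap, d. rewrite !fabc_right by lra.
    replace (z + b' + (b - b')) with (z + b) by ring. ring. }
  assert (Hv0 : gap f1 a a' d v0 = c' - c) by (pose proof (Hgap x0 Hx0) as E; fold v0 in E; lra).
  assert (Hdec := sh_decreasing H1 v0 (v0 + d) ltac:(unfold v0; lra) ltac:(unfold d; lra)).
  assert (Hposd := sh_pos H1 (v0 + d) ltac:(unfold v0, d; lra)).
  assert (Haa : a' < a) by (unfold gap in Hpos; nra).
  split; [lra|].
  intros z Hzb Hzb' Heq.
  destruct (Req_dec z x0) as [|Hne]; [assumption | exfalso].
  destruct (Rlt_dec (- b') z) as [Hz | Hz].
  - assert (Hlt := Hmax (z + b') ltac:(lra) ltac:(unfold v0; lra)).
    pose proof (Hgap z Hz). lra.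
  - destruct (Rlt_dec (- b) z) as [Hz' | Hz'].
    + assert (F a b c x0 < F a b c z) by (apply (fabc_decreasing H1 H2); lra).
      assert (c' < F a' b' c' x0) by (apply (fabc_gt_right H1); lra).
      assert (F a' b' c' z < c') by (apply (fabc_lt_left H2); lra).
      lra.
    + rewrite !fabc_left in Heq by lra.
      pose proof (sh_decreasing H2 (- z - b) (- z - b') ltac:(lra) ltac:(lra)).
      pose proof (sh_pos H2 (- z - b') ltac:(lra)).
      assert (c < c') by lra. nra.
Qed.

Lemma fabc_tangent_between a b c a' b' c' x0 :
  0 < a -> 0 < a' -> - b < x0 < - b' ->
  F a b c x0 = F a' b' c' x0 -> a * f1' (x0 + b) = a' * f2' (- x0 - b') ->
  c < c' /\ forall z, z <> - b -> z <> - b' -> F a b c z = F a' b' c' z -> z = x0.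
Proof.
  intros Ha Ha' Hx0 Hp Hslope.
  assert (c < F a b c x0) by (apply (fabc_gt_right H1); lra).
  assert (F a' b' c' x0 < c') by (apply (fabc_lt_left H2); lra).
  split; [lra|].
  intros z Hzb Hzb' Heq.
  destruct (Req_dec z x0) as [|Hne]; [assumption | exfalso].
  destruct (Rlt_dec z (- b)) as [Hzl | Hzl]; [|destruct (Rlt_dec (- b') z) as [Hzr | Hzr]].
  - assert (F a b c z < c) by (apply (fabc_lt_left H2); lra).
    assert (F a' b' c' x0 < F a' b' c' z) by (apply (fabc_decreasing H1 H2); lra).
    lra.
  - assert (c' < F a' b' c' z) by (apply (fabc_gt_right H1); lra).
    assert (F a b c z < F a b c x0) by (apply (fabc_decreasing H1 H2); lra).
    lra.
  - assert (Ht := strictly_convex_tangent_lt _ _ x0 z 0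
      (between_branches_convex H1 H2 a b c a' b' c' Ha Ha') ltac:(simpl; intros; lra)
      Hx0 ltac:(simpl; lra) Hne
      ltac:(rewrite <- (Rminus_diag_eq _ _ Hslope);
            apply derivable_pt_lim_sub; [apply (right_branch_derivable H1) | apply (left_branch_derivable H2)]; lra)).
    simpl in Ht. rewrite fabc_right, fabc_left in Hp, Heq by lra. lra.
Qed.

End RightOfPoles.

Section GeneralPosition.

Context {f1 f2 f1' f2' : R -> R}.
Context (H1 : hyperbolic_with_deriv f1 f1') (H2 : hyperbolic_with_deriv f2 f2').

Local Notation F := (fabc f1 f2).
Local Notation slope := (fslope f1' f2').

Lemma line_touch_slope s t a b c x0 :
  s < 0 -> 0 < a -> x0 <> - b -> F a b c x0 = s * x0 + t ->
  (forall z, z <> - b -> F a b c z = s * z + t -> z = x0) ->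
  s = slope a b x0.
Proof.
  intros Hs Ha Hx0 Hp Honly.
  destruct (Rlt_dec (- b) x0) as [Hr | Hl].
  - rewrite fslope_right by exact Hr.
    apply (line_touch_slope_right (f2 := f2) H1 s t a b c x0); auto.
    intros z Hz. apply Honly. lra.
  - rewrite <- fslope_reflect, fslope_right by lra.
    apply (line_touch_slope_right (f2 := f1) H2 s (- t) a (- b) (- c) (- x0)); try lra.
    + rewrite fabc_reflect by exact Hx0. lra.
    + intros z Hz E. rewrite <- (Ropp_involutive z), fabc_reflect in E by lra.
      assert (- z = x0) by (apply Honly; lra). lra.
Qed.

Lemma line_tangent_meet s t a b c x0 z :
  s < 0 -> 0 < a -> x0 <> - b -> F a b c x0 = s * x0 + t -> s = slope a b x0 ->
  z <> - b -> F a b c z = s * z + t -> z = x0.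
Proof.
  intros Hs Ha Hx0 Hp Hslope Hz Hq.
  destruct (Rlt_dec (- b) x0) as [Hr | Hl].
  - rewrite fslope_right in Hslope by exact Hr.
    exact (line_tangent_meet_right H1 H2 s t a b c x0 z Hs Ha Hr Hp Hslope Hz Hq).
  - rewrite <- fslope_reflect, fslope_right in Hslope by lra.
    assert (- z = - x0); [|lra].
    apply (line_tangent_meet_right H2 H1 s (- t) a (- b) (- c) (- x0) (- z)); try lra.
    + rewrite fabc_reflect by exact Hx0. lra.
    + rewrite fabc_reflect by exact Hz. lra.
Qed.

Lemma fabc_touch_slope_ordered a b c a' b' c' x0 :
  0 < a -> 0 < a' -> b' < b -> c <> c' -> x0 <> - b -> x0 <> - b' ->
  F a b c x0 = F a' b' c' x0 ->
  (forall z, z <> - b -> z <> - b' -> F a b c z = F a' b' c' z -> z = x0) ->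
  slope a b x0 = slope a' b' x0.
Proof.
  intros Ha Ha' Hb Hc Hx Hx' Hp Honly.
  assert (Honly' : forall z, z <> b' -> z <> b ->
            fabc f2 f1 a' (- b') (- c') z = fabc f2 f1 a (- b) (- c) z -> z = - x0).
  { intros z Hz Hz' E. rewrite <- (Ropp_involutive z), !fabc_reflect in E by lra.
    assert (- z = x0) by (apply Honly; lra). lra. }
  destruct (Rlt_dec c' c) as [Hcc | Hcc].
  - exfalso.
    destruct (fabc_meet_right_of_poles (f2 := f2) H1 a b c a' b' c') as [z1 [Hz1 E1]]; try lra.
    destruct (fabc_meet_right_of_poles (f2 := f1) H2 a' (- b') (- c') a (- b) (- c))
      as [z2 [Hz2 E2]]; try lra.
    assert (z1 = x0) by (apply Honly; lra).
    assert (z2 = - x0) by (apply Honly'; lra).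
    lra.
  - destruct (Rlt_dec (- b') x0) as [Hr | Hr]; [|destruct (Rlt_dec x0 (- b)) as [Hl | Hl]].
    + rewrite !fslope_right by lra.
      apply (fabc_touch_slope_right (f2 := f2) H1 a b c a' b' c' x0); try lra.
      intros z Hz. apply Honly; lra.
    + rewrite <- (fslope_reflect f1' f2' a b), <- (fslope_reflect f1' f2' a' b'),
        !fslope_right by lra.
      symmetry.
      apply (fabc_touch_slope_right (f2 := f1) H2 a' (- b') (- c') a (- b) (- c) (- x0)); try lra.
      * rewrite !fabc_reflect by lra. lra.
      * intros z Hz. apply Honly'; lra.
    + rewrite fslope_right, fslope_left by lra.
      apply (fabc_touch_slope_between H1 H2 a b c a' b' c' x0); try lra.
      intros z Hz. apply Honly; lra.
Qed.

Lemma fabc_touch_slope a b c a' b' c' x0 :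
  0 < a -> 0 < a' -> b <> b' -> c <> c' -> x0 <> - b -> x0 <> - b' ->
  F a b c x0 = F a' b' c' x0 ->
  (forall z, z <> - b -> z <> - b' -> F a b c z = F a' b' c' z -> z = x0) ->
  slope a b x0 = slope a' b' x0.
Proof.
  intros Ha Ha' Hb Hc Hx Hx' Hp Honly.
  destruct (Rlt_dec b' b).
  - apply (fabc_touch_slope_ordered a b c a' b' c' x0); auto.
  - symmetry. apply (fabc_touch_slope_ordered a' b' c' a b c x0); auto; lra.
Qed.

Lemma fabc_tangent_ordered a b c a' b' c' x0 :
  0 < a -> 0 < a' -> b' < b -> x0 <> - b -> x0 <> - b' ->
  F a b c x0 = F a' b' c' x0 -> slope a b x0 = slope a' b' x0 ->
  c <> c' /\ forall z, z <> - b -> z <> - b' -> F a b c z = F a' b' c' z -> z = x0.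
Proof.
  intros Ha Ha' Hb Hx Hx' Hp Hslope.
  destruct (Rlt_dec (- b') x0) as [Hr | Hr]; [|destruct (Rlt_dec x0 (- b)) as [Hl | Hl]].
  - rewrite !fslope_right in Hslope by lra.
    destruct (fabc_tangent_right H1 H2 a b c a' b' c' x0) as [Hc Honly]; try lra.
    split; [lra | exact Honly].
  - rewrite <- (fslope_reflect f1' f2' a b), <- (fslope_reflect f1' f2' a' b'),
      !fslope_right in Hslope by lra.
    destruct (fabc_tangent_right H2 H1 a' (- b') (- c') a (- b) (- c) (- x0))
      as [Hc Honly]; try lra.
    { rewrite !fabc_reflect by lra. lra. }
    split; [lra|].
    intros z Hz Hz' E. assert (- z = - x0); [|lra].
    apply Honly; try lra. rewrite !fabc_reflect by lra. lra.
  - rewrite fslope_right, fslope_left in Hslope by lra.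
    destruct (fabc_tangent_between H1 H2 a b c a' b' c' x0) as [Hc Honly]; try lra.
    split; [lra | exact Honly].
Qed.

Lemma fabc_tangent a b c a' b' c' x0 :
  0 < a -> 0 < a' -> b <> b' -> x0 <> - b -> x0 <> - b' ->
  F a b c x0 = F a' b' c' x0 -> slope a b x0 = slope a' b' x0 ->
  c <> c' /\ forall z, z <> - b -> z <> - b' -> F a b c z = F a' b' c' z -> z = x0.
Proof.
  intros Ha Ha' Hb Hx Hx' Hp Hslope.
  destruct (Rlt_dec b' b).
  - apply fabc_tangent_ordered; auto.
  - destruct (fabc_tangent_ordered a' b' c' a b c x0 Ha' Ha ltac:(lra) Hx' Hx
      (eq_sym Hp) (eq_sym Hslope)) as [Hc Honly].
    split; [congruence | intros z Hz Hz' E; apply Honly; auto].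
Qed.

Lemma fabc_tangent_same_pole a b c a' c' x0 :
  0 < a -> 0 < a' -> x0 <> - b ->
  F a b c x0 = F a' b c' x0 -> slope a b x0 = slope a' b x0 -> a = a' /\ c = c'.
Proof.
  intros Ha Ha' Hx Hp Hslope.
  destruct (Rlt_dec (- b) x0) as [Hr | Hl].
  - rewrite !fslope_right in Hslope by exact Hr. rewrite !fabc_right in Hp by exact Hr.
    pose proof (sh_deriv_neg H1 (x0 + b) ltac:(lra)).
    assert (a = a') by (apply (Rmult_eq_reg_r (f1' (x0 + b))); lra).
    subst a'. split; [reflexivity | lra].
  - rewrite !fslope_left in Hslope by lra. rewrite !fabc_left in Hp by lra.
    pose proof (sh_deriv_neg H2 (- x0 - b) ltac:(lra)).
    assert (a = a') by (apply (Rmult_eq_reg_r (f2' (- x0 - b))); lra).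
    subst a'. split; [reflexivity | lra].
Qed.

End GeneralPosition.

Definition meet_only_at (C D : Pt -> Prop) (p : Pt) : Prop := forall z, C z -> D z -> z = p.

Definition has_slope_at (f1 f2 f1' f2' : R -> R) (C : Pt -> Prop) (x0 y0 m : R) : Prop :=
  (exists a b c, 0 < a /\ C = fbar f1 f2 a b c /\ x0 <> - b /\
     y0 = fabc f1 f2 a b c x0 /\ m = fslope f1' f2' a b x0) \/
  (exists s t, s < 0 /\ C = lbar s t /\ y0 = s * x0 + t /\ m = s).

Section Touching.

Context {f1 f2 f1' f2' : R -> R}.
Context (H1 : hyperbolic_with_deriv f1 f1') (H2 : hyperbolic_with_deriv f2 f2').

Local Notation F := (fabc f1 f2).
Local Notation slope_at := (has_slope_at f1 f2 f1' f2').

Lemma has_slope_at_exists C x0 y0 :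
  in_Cminus f1 f2 C -> C (Some x0, Some y0) -> exists m, slope_at C x0 y0 m.
Proof.
  intros [[a [b [c [Ha ->]]]] | [s [t [Hs ->]]]] Hp.
  - apply fbar_iff in Hp as [Hx Hy].
    exists (fslope f1' f2' a b x0). left. exists a, b, c. auto.
  - apply lbar_iff in Hp.
    exists s. right. exists s, t. auto.
Qed.

Lemma touch_same_slope C D x0 y0 m m' :
  slope_at C x0 y0 m -> slope_at D x0 y0 m' -> meet_only_at C D (Some x0, Some y0) -> m = m'.
Proof.
  intros [[a [b [c (Ha & -> & Hx & Hy & ->)]]] | [s [t (Hs & -> & Hy & ->)]]]
         [[a' [b' [c' (Ha' & -> & Hx' & Hy' & ->)]]] | [s' [t' (Hs' & -> & Hy' & ->)]]] Honly.
  - apply (fabc_touch_slope H1 H2 a b c a' b' c' x0); auto; try congruence.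
    + intros <-. specialize (Honly (Some (- b), None)).
      rewrite !fbar_iff in Honly. discriminate (Honly eq_refl eq_refl).
    + intros <-. specialize (Honly (None, Some c)).
      rewrite !fbar_iff in Honly. discriminate (Honly eq_refl eq_refl).
    + intros z Hz Hz' E. specialize (Honly (Some z, Some (F a b c z))).
      rewrite !fbar_iff in Honly. injection (Honly (conj Hz eq_refl) (conj Hz' E)). auto.
  - symmetry. apply (line_touch_slope H1 H2 s' t' a b c x0); auto; try congruence.
    intros z Hz E. specialize (Honly (Some z, Some (s' * z + t'))).
    rewrite fbar_iff, lbar_iff in Honly. injection (Honly (conj Hz (eq_sym E)) eq_refl). auto.
  - apply (line_touch_slope H1 H2 s t a' b' c' x0); auto; try congruence.
    intros z Hz E. specialize (Honly (Some z, Some (s * z + t))).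
    rewrite fbar_iff, lbar_iff in Honly. injection (Honly eq_refl (conj Hz (eq_sym E))). auto.
  - specialize (Honly (None, None)).
    rewrite !lbar_iff in Honly. discriminate (Honly I I).
Qed.

Lemma fbar_tangent_eq a b c a' b' c' x0 q :
  0 < a -> 0 < a' -> x0 <> - b -> x0 <> - b' ->
  F a b c x0 = F a' b' c' x0 -> fslope f1' f2' a b x0 = fslope f1' f2' a' b' x0 ->
  fbar f1 f2 a b c q -> fbar f1 f2 a' b' c' q -> q <> (Some x0, Some (F a b c x0)) ->
  fbar f1 f2 a b c = fbar f1 f2 a' b' c'.
Proof.
  intros Ha Ha' Hx Hx' Hp Hslope Hq Hq' Hne.
  destruct (Req_dec b b') as [<- | Hb].
  - destruct (fabc_tangent_same_pole H1 H2 a b c a' c' x0) as [<- <-]; auto.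
  - exfalso.
    destruct (fabc_tangent H1 H2 a b c a' b' c' x0) as [Hc Honly]; auto.
    destruct q as [[z|] [y|]]; rewrite !fbar_iff in Hq, Hq'; simpl in Hq, Hq'.
    + destruct Hq as [Hz ->], Hq' as [Hz' E].
      apply Hne. rewrite (Honly z Hz Hz' E). reflexivity.
    + apply Hb. lra.
    + apply Hc. congruence.
    + contradiction.
Qed.

Lemma lbar_fbar_tangent_meet s t a b c x0 q :
  s < 0 -> 0 < a -> x0 <> - b -> F a b c x0 = s * x0 + t -> s = fslope f1' f2' a b x0 ->
  lbar s t q -> fbar f1 f2 a b c q -> q = (Some x0, Some (s * x0 + t)).
Proof.
  intros Hs Ha Hx Hp Hslope Hq Hq'.
  destruct q as [[z|] [y|]]; rewrite lbar_iff in Hq; rewrite fbar_iff in Hq';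
    simpl in Hq, Hq'; try contradiction.
  destruct Hq' as [Hz E]. subst y.
  rewrite (line_tangent_meet H1 H2 s t a b c x0 z); auto.
Qed.

Lemma tangent_curves_eq C D x0 y0 m q :
  slope_at C x0 y0 m -> slope_at D x0 y0 m -> C q -> D q -> q <> (Some x0, Some y0) -> C = D.
Proof.
  intros [[a [b [c (Ha & -> & Hx & Hy & Hm)]]] | [s [t (Hs & -> & Hy & Hm)]]]
         [[a' [b' [c' (Ha' & -> & Hx' & Hy' & Hm')]]] | [s' [t' (Hs' & -> & Hy' & Hm')]]]
         Hq Hq' Hne; subst y0.
  - apply (fbar_tangent_eq a b c a' b' c' x0 q); auto; congruence.
  - exfalso. apply Hne. rewrite Hy'.
    apply (lbar_fbar_tangent_meet s' t' a b c x0); auto; congruence.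
  - exfalso. apply Hne.
    apply (lbar_fbar_tangent_meet s t a' b' c' x0); auto; congruence.
  - assert (s' = s) as -> by congruence. replace t' with t by lra. reflexivity.
Qed.

Lemma touch_unique_finite C D1 D2 x0 y0 q :
  in_Cminus f1 f2 C -> in_Cminus f1 f2 D1 -> in_Cminus f1 f2 D2 ->
  C (Some x0, Some y0) -> D1 (Some x0, Some y0) -> D2 (Some x0, Some y0) ->
  meet_only_at C D1 (Some x0, Some y0) -> meet_only_at C D2 (Some x0, Some y0) ->
  D1 q -> D2 q -> q <> (Some x0, Some y0) -> D1 = D2.
Proof.
  intros HC HD1 HD2 Hp Hp1 Hp2 Htouch1 Htouch2 Hq1 Hq2 Hne.
  destruct (has_slope_at_exists C x0 y0 HC Hp) as [m Hm].
  destruct (has_slope_at_exists D1 x0 y0 HD1 Hp1) as [m1 Hm1].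
  destruct (has_slope_at_exists D2 x0 y0 HD2 Hp2) as [m2 Hm2].
  rewrite <- (touch_same_slope C D1 x0 y0 m m1 Hm Hm1 Htouch1) in Hm1.
  rewrite <- (touch_same_slope C D2 x0 y0 m m2 Hm Hm2 Htouch2) in Hm2.
  exact (tangent_curves_eq D1 D2 x0 y0 m q Hm1 Hm2 Hq1 Hq2 Hne).
Qed.

End Touching.

(** * Touching at a point at infinity *)

Section PointsAtInfinity.

Context {f1 f2 f1' f2' : R -> R}.
Context (H1 : hyperbolic_with_deriv f1 f1') (H2 : hyperbolic_with_deriv f2 f2').

Local Notation F := (fabc f1 f2).

Lemma fabc_injective a b c x y :
  0 < a -> x <> - b -> y <> - b -> F a b c x = F a b c y -> x = y.
Proof.
  intros Ha Hx Hy E.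
  assert (Hne : forall u v, u < v -> u <> - b -> v <> - b -> F a b c u <> F a b c v).
  { intros u v Huv Hu Hv Euv.
    destruct (Rlt_dec (- b) u) as [Hu' | Hu']; [|destruct (Rlt_dec v (- b)) as [Hv' | Hv']].
    - pose proof (fabc_decreasing H1 H2 a b c u v Ha Huv (or_introl Hu')). lra.
    - pose proof (fabc_decreasing H1 H2 a b c u v Ha Huv (or_intror Hv')). lra.
    - pose proof (fabc_lt_left (f1 := f1) H2 a b c u Ha ltac:(lra)).
      pose proof (fabc_gt_right (f2 := f2) H1 a b c v Ha ltac:(lra)). lra. }
  destruct (Rtotal_order x y) as [Hxy | [Hxy | Hxy]]; [exfalso | exact Hxy | exfalso].
  - exact (Hne x y Hxy Hx Hy E).
  - exact (Hne y x Hxy Hy Hx (eq_sym E)).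
Qed.

Lemma fabc_same_pole_meet a b c a' c' :
  a <> a' -> c <> c' -> exists z, z <> - b /\ F a b c z = F a' b c' z.
Proof.
  intros Haa Hcc.
  set (r := (c' - c) / (a - a')).
  assert (Hr : a * r + c = a' * r + c') by (unfold r; field; intros E; apply Haa; lra).
  destruct (Rlt_dec 0 r) as [Hpos | Hneg].
  - destruct (sh_onto H1 r Hpos) as [u [Hu Hfu]].
    exists (u - b). split; [lra|].
    rewrite !fabc_right by lra. replace (u - b + b) with u by ring. rewrite Hfu. exact Hr.
  - assert (Hr0 : r <> 0) by (intros E; rewrite E in Hr; lra).
    destruct (sh_onto H2 (- r) ltac:(lra)) as [u [Hu Hfu]].
    exists (- u - b). split; [lra|].
    rewrite !fabc_left by lra. replace (- (- u - b) - b) with u by ring. rewrite Hfu. lra.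
Qed.

Lemma fabc_same_asymptote_meet_ordered a b c a' b' :
  0 < a -> 0 < a' -> b' < b -> a <> a' ->
  exists z, z <> - b /\ z <> - b' /\ F a b c z = F a' b' c z.
Proof.
  intros Ha Ha' Hb Haa.
  destruct (Rlt_dec a' a) as [Hlt | Hgt].
  - destruct (gap_root H1 a a' (b - b')) as [v [Hv Hv0]]; try lra.
    exists (v - b'). split; [lra | split; [lra|]].
    rewrite !fabc_right by lra. unfold gap in Hv0.
    replace (v - b' + b) with (v + (b - b')) by ring. replace (v - b' + b') with v by ring.
    lra.
  - destruct (gap_root H2 a' a (b - b')) as [u [Hu Hu0]]; try lra.
    exists (- u - b). split; [lra | split; [lra|]].
    rewrite !fabc_left by lra. unfold gap in Hu0.
    replace (- (- u - b) - b) with u by ring.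
    replace (- (- u - b) - b') with (u + (b - b')) by ring.
    lra.
Qed.

Lemma fabc_same_asymptote_meet a b c a' b' :
  0 < a -> 0 < a' -> b <> b' -> a <> a' ->
  exists z, z <> - b /\ z <> - b' /\ F a b c z = F a' b' c z.
Proof.
  intros Ha Ha' Hb Haa.
  destruct (Rlt_dec b' b).
  - apply fabc_same_asymptote_meet_ordered; auto.
  - destruct (fabc_same_asymptote_meet_ordered a' b' c a b) as [z (Hz & Hz' & E)]; auto; try lra.
    exists z. auto.
Qed.

Lemma touch_at_pole_same_a a c a' c' x0 :
  meet_only_at (fbar f1 f2 a (- x0) c) (fbar f1 f2 a' (- x0) c') (Some x0, None) -> a = a'.
Proof.
  intros Honly. destruct (Req_dec a a') as [|Haa]; [assumption | exfalso].
  destruct (Req_dec c c') as [<- | Hcc].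
  - specialize (Honly (None, Some c)). rewrite !fbar_iff in Honly.
    discriminate (Honly eq_refl eq_refl).
  - destruct (fabc_same_pole_meet a (- x0) c a' c' Haa Hcc) as [z [Hz E]].
    specialize (Honly (Some z, Some (F a (- x0) c z))). rewrite !fbar_iff in Honly.
    discriminate (Honly (conj Hz eq_refl) (conj Hz E)).
Qed.

Lemma touch_at_asymptote_same_a a b c a' b' :
  0 < a -> 0 < a' ->
  meet_only_at (fbar f1 f2 a b c) (fbar f1 f2 a' b' c) (None, Some c) -> a = a'.
Proof.
  intros Ha Ha' Honly. destruct (Req_dec a a') as [|Haa]; [assumption | exfalso].
  destruct (Req_dec b b') as [<- | Hbb].
  - specialize (Honly (Some (- b), None)). rewrite !fbar_iff in Honly.
    discriminate (Honly eq_refl eq_refl).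
  - destruct (fabc_same_asymptote_meet a b c a' b' Ha Ha' Hbb Haa) as [z (Hz & Hz' & E)].
    specialize (Honly (Some z, Some (F a b c z))). rewrite !fbar_iff in Honly.
    discriminate (Honly (conj Hz eq_refl) (conj Hz' E)).
Qed.

Lemma touch_unique_pole C D1 D2 x0 q :
  in_Cminus f1 f2 C -> in_Cminus f1 f2 D1 -> in_Cminus f1 f2 D2 ->
  C (Some x0, None) -> D1 (Some x0, None) -> D2 (Some x0, None) ->
  meet_only_at C D1 (Some x0, None) -> meet_only_at C D2 (Some x0, None) ->
  D1 q -> D2 q -> ~ parallel (Some x0, None) q -> D1 = D2.
Proof.
  assert (Hpole : forall E, in_Cminus f1 f2 E -> E (Some x0, None) ->
            exists a c, E = fbar f1 f2 a (- x0) c).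
  { intros E [[a [b [c [_ ->]]]] | [s [t [_ ->]]]] Hp.
    - rewrite fbar_iff in Hp. simpl in Hp. subst x0.
      exists a, c. now rewrite Ropp_involutive.
    - rewrite lbar_iff in Hp. contradiction. }
  intros HC HD1 HD2 Hp Hp1 Hp2 Htouch1 Htouch2 Hq1 Hq2 Hpar.
  destruct (Hpole C HC Hp) as [a [c ->]].
  destruct (Hpole D1 HD1 Hp1) as [a1 [c1 ->]].
  destruct (Hpole D2 HD2 Hp2) as [a2 [c2 ->]].
  rewrite <- (touch_at_pole_same_a a c a1 c1 x0 Htouch1) in *.
  rewrite <- (touch_at_pole_same_a a c a2 c2 x0 Htouch2) in *.
  destruct q as [[z|] [y|]]; rewrite !fbar_iff in Hq1, Hq2; simpl in Hq1, Hq2.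
  - destruct Hq1 as [_ E1], Hq2 as [_ E2].
    rewrite fabc_offset in E1, E2. replace c2 with c1 by lra. reflexivity.
  - exfalso. apply Hpar. right. reflexivity.
  - congruence.
  - contradiction.
Qed.

Lemma touch_unique_asymptote C D1 D2 y0 q :
  in_Cminus f1 f2 C -> in_Cminus f1 f2 D1 -> in_Cminus f1 f2 D2 ->
  C (None, Some y0) -> D1 (None, Some y0) -> D2 (None, Some y0) ->
  meet_only_at C D1 (None, Some y0) -> meet_only_at C D2 (None, Some y0) ->
  D1 q -> D2 q -> ~ parallel (None, Some y0) q -> D1 = D2.
Proof.
  assert (Hasym : forall E, in_Cminus f1 f2 E -> E (None, Some y0) ->
            exists a b, 0 < a /\ E = fbar f1 f2 a b y0).
  { intros E [[a [b [c [Ha ->]]]] | [s [t [_ ->]]]] Hp.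
    - rewrite fbar_iff in Hp. simpl in Hp. subst y0. exists a, b. auto.
    - rewrite lbar_iff in Hp. contradiction. }
  intros HC HD1 HD2 Hp Hp1 Hp2 Htouch1 Htouch2 Hq1 Hq2 Hpar.
  destruct (Hasym C HC Hp) as [a [b [Ha ->]]].
  destruct (Hasym D1 HD1 Hp1) as [a1 [b1 [Ha1 ->]]].
  destruct (Hasym D2 HD2 Hp2) as [a2 [b2 [Ha2 ->]]].
  rewrite <- (touch_at_asymptote_same_a a b y0 a1 b1 Ha Ha1 Htouch1) in *.
  rewrite <- (touch_at_asymptote_same_a a b y0 a2 b2 Ha Ha2 Htouch2) in *.
  destruct q as [[z|] [y|]]; rewrite !fbar_iff in Hq1, Hq2; simpl in Hq1, Hq2;
    try (exfalso; apply Hpar; left; reflexivity).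
  - destruct Hq1 as [Hz1 E1], Hq2 as [Hz2 E2].
    rewrite fabc_shift in E1, E2.
    assert (z + b1 = z + b2); [|replace b2 with b1 by lra; reflexivity].
    apply (fabc_injective a 0 y0); auto; lra.
  - replace b2 with b1 by lra. reflexivity.
Qed.

End PointsAtInfinity.

Lemma lines_touch_same_slope s t s' t' :
  meet_only_at (lbar s t) (lbar s' t') (None, None) -> s = s'.
Proof.
  intros Honly. destruct (Req_dec s s') as [|Hne]; [assumption | exfalso].
  set (x := (t' - t) / (s - s')).
  assert (E : s * x + t = s' * x + t') by (unfold x; field; intros E; apply Hne; lra).
  specialize (Honly (Some x, Some (s * x + t))). rewrite !lbar_iff in Honly.
  discriminate (Honly eq_refl E).
Qed.

Lemma touch_unique_infinity f1 f2 C D1 D2 q :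
  in_Cminus f1 f2 C -> in_Cminus f1 f2 D1 -> in_Cminus f1 f2 D2 ->
  C (None, None) -> D1 (None, None) -> D2 (None, None) ->
  meet_only_at C D1 (None, None) -> meet_only_at C D2 (None, None) ->
  D1 q -> D2 q -> ~ parallel (None, None) q -> D1 = D2.
Proof.
  assert (Hline : forall E, in_Cminus f1 f2 E -> E (None, None) -> exists s t, E = lbar s t).
  { intros E [[a [b [c [_ ->]]]] | [s [t [_ ->]]]] Hp.
    - rewrite fbar_iff in Hp. contradiction.
    - exists s, t. reflexivity. }
  intros HC HD1 HD2 Hp Hp1 Hp2 Htouch1 Htouch2 Hq1 Hq2 Hpar.
  destruct (Hline C HC Hp) as [s [t ->]].
  destruct (Hline D1 HD1 Hp1) as [s1 [t1 ->]].
  destruct (Hline D2 HD2 Hp2) as [s2 [t2 ->]].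
  rewrite <- (lines_touch_same_slope s t s1 t1 Htouch1) in *.
  rewrite <- (lines_touch_same_slope s t s2 t2 Htouch2) in *.
  destruct q as [[z|] [y|]]; rewrite !lbar_iff in Hq1, Hq2; simpl in Hq1, Hq2;
    try contradiction.
  - replace t2 with t1 by lra. reflexivity.
  - exfalso. apply Hpar. left. reflexivity.
Qed.

Theorem theorem4p14 (f1 f2 : R -> R)
  (hf1 : strongly_hyperbolic f1) (hf2 : strongly_hyperbolic f2)
  (C : Pt -> Prop) (p q : Pt)
  (hC : in_Cminus f1 f2 C) (hp : C p) (hq : ~ C q) (hpq : ~ parallel p q)
  (D1 D2 : Pt -> Prop) :
  in_Cminus f1 f2 D1 -> D1 p -> D1 q -> (forall z, (C z /\ D1 z) <-> z = p) ->
  in_Cminus f1 f2 D2 -> D2 p -> D2 q -> (forall z, (C z /\ D2 z) <-> z = p) ->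
  D1 = D2.
Proof.
  intros hD1 h1p h1q hT1 hD2 h2p h2q hT2.
  destruct (hyperbolic_with_deriv_exists f1 hf1) as [f1' H1].
  destruct (hyperbolic_with_deriv_exists f2 hf2) as [f2' H2].
  assert (Htouch1 : meet_only_at C D1 p) by (intros z Hz Hz'; apply hT1; auto).
  assert (Htouch2 : meet_only_at C D2 p) by (intros z Hz Hz'; apply hT2; auto).
  destruct p as [[x0|] [y0|]].
  - apply (touch_unique_finite H1 H2 C D1 D2 x0 y0 q); auto.
    intros ->. contradiction.
  - apply (touch_unique_pole H1 H2 C D1 D2 x0 q); auto.
  - apply (touch_unique_asymptote H1 H2 C D1 D2 y0 q); auto.
  - apply (touch_unique_infinity f1 f2 C D1 D2 q); auto.
Qed.
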